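(* Let $\mathbf u\in\{0,1\}^{\mathbb N}$ and $\sigma\in\{L,M,R\}^*$ with $\inf(\mathbf u)\ge\inf(\sigma(1\overline0))$ and $\sup(\mathbf u)\le\sup(\sigma(0\overline1))$. Then either $\mathbf u$ has a suffix equal to $\sigma(\mathbf v)$ for some $\mathbf v\in\{0,1\}^{\mathbb N}$, or $\mathbf u$ has a suffix equal to $\sigma'(\overline0)$ for some $\sigma'\in\{L,M,R\}^*M$ such that $\sigma=\sigma'\tau$ for some $\tau\in\{L,M,R\}^*$.
   Context: Infinite words over $\{0,1\}$ are ordered lexicographically; $\overline{w}$ denotes infinite repetition of $w$. For $\mathbf u=u_1u_2\cdots\in\{0,1\}^{\mathbb N}$, $\sup(\mathbf u)$ and $\inf(\mathbf u)$ are the lexicographic supremum and infimum of $\{u_ku_{k+1}\cdots:k\ge1\}$. Substitutions (monoid morphisms on words, extended letterwise to infinite words): $L:0\mapsto0,1\mapsto01$; $M:0\mapsto01,1\mapsto10$; $R:0\mapsto01,1\mapsto1$. $\{L,M,R\}^*$ is the monoid they generate under composition (including the identity), and $\{L,M,R\}^*M=\{\tau M:\tau\in\{L,M,R\}^*\}$. *)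

From mathcomp Require Import all_boot.
From Stdlib Require Import ClassicalEpsilon.
Set Implicit Arguments. Unset Strict Implicit. Unset Printing Implicit Defensive.

(* Letters: false = 0, true = 1.  Infinite words: nat -> bool (index 0 = u_1). *)
Definition word := nat -> bool.

Inductive gen := GL | GM | GR.

Definition img (g : gen) (b : bool) : seq bool :=
  match g, b with
  | GL, false => [:: false]        | GL, true => [:: false; true]
  | GM, false => [:: false; true]  | GM, true => [:: true; false]
  | GR, false => [:: false; true]  | GR, true => [:: true]
  end.

(* Image of an infinite word under a single (non-erasing) generator:
   letter n of g(u) is letter n of g(u_0) g(u_1) ... g(u_n) (which has length > n). *)
Definition gen_inf (g : gen) (u : word) : word :=
  fun n => nth false (flatten [seq img g (u i) | i <- iota 0 n.+1]) n.

(* A list [g1; ...; gk] denotes the composition g1 o g2 o ... o gk. *)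
Definition subst_inf (s : seq gen) (u : word) : word := foldr gen_inf u s.
Definition subst_fin (s : seq gen) (w : seq bool) : seq bool :=
  foldr (fun g w => flatten [seq img g b | b <- w]) w s.
Definition morph_eq (s t : seq gen) : Prop := forall w, subst_fin s w = subst_fin t w.

Definition lex_lt (u v : word) : Prop :=
  exists n, (forall i, i < n -> u i = v i) /\ u n = false /\ v n = true.
Definition lex_le (u v : word) : Prop := (forall i, u i = v i) \/ lex_lt u v.

Definition suffixes (u : word) : word -> Prop :=
  fun x => exists k, forall n, x n = u (k + n).

Definition is_sup (S : word -> Prop) (x : word) : Prop :=
  (forall y, S y -> lex_le y x) /\ (forall z, (forall y, S y -> lex_le y z) -> lex_le x z).
Definition is_inf (S : word -> Prop) (x : word) : Prop :=
  (forall y, S y -> lex_le x y) /\ (forall z, (forall y, S y -> lex_le z y) -> lex_le z x).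

Definition sup_word (u : word) : word :=
  epsilon (inhabits (fun _ => false)) (is_sup (suffixes u)).
Definition inf_word (u : word) : word :=
  epsilon (inhabits (fun _ => false)) (is_inf (suffixes u)).

Definition zero_bar : word := fun _ => false.
Definition one_zero_bar : word := fun n => n == 0.
Definition zero_one_bar : word := fun n => n != 0.

(** Both hypotheses are only ever used at finite precision: every prefix of every
    suffix of [u] lies lexicographically between prefixes of suffixes of
    [Y = sigma(1 0^oo)] and of [X = sigma(0 1^oo)].  Write [sigma = g sigma'] and
    induct on [sigma].  Comparing with suffixes of [g(Y')] and [g(X')] shows that
    [u] avoids the factor [11] (for [L]), the factor [00] (for [R]), or alternates
    in blocks [01]/[10] from some point on (for [M]); hence some suffix of [u] is a
    [g]-image [g(w)].  Each generator reflects the lexicographic order at the cost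
    of doubling the precision, so the bounds descend to [w] with [Y'] and [X'] in
    place of [Y] and [X].  The descent breaks down only for [g = M] and a constant
    [w], and then [u] ends in [M(0^oo)], the second alternative. *)

From mathcomp Require Import all_boot zify.
From Stdlib Require Import FunctionalExtensionality ClassicalEpsilon Classical Lia.
Set Implicit Arguments. Unset Strict Implicit. Unset Printing Implicit Defensive.

(** * Shifts and finite prefixes of infinite words *)

Definition shift (k : nat) (u : word) : word := fun n => u (k + n).
Definition prepend (p : seq bool) (w : word) : word :=
  fun n => if n < size p then nth false p n else w (n - size p).
Definition neg (u : word) : word := fun n => ~~ u n.

Lemma shift0 u : shift 0 u = u.
Proof. exact: functional_extensionality. Qed.

Lemma shiftD a b u : shift a (shift b u) = shift (b + a) u.
Proof. by apply: functional_extensionality => n; rewrite /shift addnA. Qed.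

Lemma shift1S p u : shift 1 (shift p u) = shift p.+1 u.
Proof. by rewrite shiftD addn1. Qed.

Lemma shift_head k u : shift k u 0 = u k.
Proof. by rewrite /shift addn0. Qed.

Lemma shift_prepend p w : shift (size p) (prepend p w) = w.
Proof.
apply: functional_extensionality => n.
by rewrite /shift /prepend ltnNge leq_addr /= addKn.
Qed.

Lemma shift_prepend_drop i p w : i <= size p ->
  shift i (prepend p w) = prepend (drop i p) w.
Proof.
move=> le_ip; apply: functional_extensionality => n.
rewrite /shift /prepend size_drop nth_drop ltn_subRL.
by case: ifP => // _; congr w; lia.
Qed.

Lemma prepend_nil w : prepend [::] w = w.
Proof. by apply: functional_extensionality => n; rewrite /prepend subn0. Qed.

Lemma prepend_cons a p w : prepend (a :: p) w = prepend [:: a] (prepend p w).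
Proof. by apply: functional_extensionality => -[|n]; rewrite /prepend //= subn1. Qed.

Lemma shift1_prepend_cons a p w : shift 1 (prepend (a :: p) w) = prepend p w.
Proof. by rewrite prepend_cons -[1]/(size [:: a]) shift_prepend. Qed.

Lemma shift_eta k u : shift k u = prepend [:: u k] (shift k.+1 u).
Proof.
apply: functional_extensionality => -[|n]; rewrite /prepend /shift /=.
  by rewrite addn0.
by rewrite subn1 addSnnS.
Qed.

Lemma word_eta u : u = prepend [:: u 0] (shift 1 u).
Proof. by rewrite -{1}(shift0 u) shift_eta. Qed.

Lemma negK : involutive neg.
Proof. by move=> u; apply: functional_extensionality => n; rewrite /neg negbK. Qed.

(** * Images under a single generator *)

Lemma size_img_gt0 g b : 0 < size (img g b).
Proof. by case: g; case: b. Qed.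

Lemma size_img_le2 g b : size (img g b) <= 2.
Proof. by case: g; case: b. Qed.

Lemma nth_flatten_iota (f : nat -> seq bool) a i :
  (forall j, 0 < size (f j)) -> i < a ->
  nth false (flatten [seq f j | j <- iota 0 a]) i =
  nth false (flatten [seq f j | j <- iota 0 i.+1]) i.
Proof.
move=> f_gt0 lt_ia; rewrite -(subnKC lt_ia) iotaD map_cat flatten_cat nth_cat.
suff long m k : m <= size (flatten [seq f j | j <- iota k m]) by rewrite long.
elim: m k => [|m IH] k //=; rewrite size_cat -add1n.
exact: leq_add (f_gt0 k) (IH _).
Qed.

Lemma gen_inf_unfold g w :
  gen_inf g w = prepend (img g (w 0)) (gen_inf g (shift 1 w)).
Proof.
apply: functional_extensionality => n; rewrite /gen_inf /prepend /= nth_cat.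
case: ifP => // /negbT; rewrite -leqNgt; set s := size _ => le_sn.
have s_gt0 : 0 < s by apply: size_img_gt0.
rewrite -(addn0 1) iotaDl -map_comp.
case: n le_sn => [|n] le_sn; first by rewrite leqNgt s_gt0 in le_sn.
by rewrite (@nth_flatten_iota (fun j => img g (w (1 + j))) n.+1) //;
  [move=> j; apply: size_img_gt0 | lia].
Qed.

Lemma gen_inf_shift_unfold g w k :
  gen_inf g (shift k w) = prepend (img g (w k)) (gen_inf g (shift k.+1 w)).
Proof. by rewrite gen_inf_unfold shift_head shift1S. Qed.

Lemma gen_inf_head g w : gen_inf g w 0 = nth false (img g (w 0)) 0.
Proof. by rewrite gen_inf_unfold /prepend size_img_gt0. Qed.

Lemma gen_inf_L_head w : gen_inf GL w 0 = false.
Proof. by rewrite gen_inf_head; case: (w 0). Qed.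

Lemma gen_inf_R_head w : gen_inf GR w 0 = w 0.
Proof. by rewrite gen_inf_head; case: (w 0). Qed.

Lemma gen_inf_M_neg w : gen_inf GM (neg w) = neg (gen_inf GM w).
Proof.
apply: functional_extensionality => n; elim/ltn_ind: n w => n IH w.
rewrite (gen_inf_unfold _ (neg w)) (gen_inf_unfold GM w).
change (shift 1 (neg w)) with (neg (shift 1 w)).
rewrite /neg /prepend; case: (w 0) => /=; case: ifP => lt_n2;
  by [case: n {IH} lt_n2 => [|[]] | rewrite IH //; lia].
Qed.

Lemma gen_inf_suffix g w k : exists p, shift p (gen_inf g w) = gen_inf g (shift k w).
Proof.
elim: k => [|k [p Ep]]; first by exists 0; rewrite !shift0.
exists (p + size (img g (w k))).
by rewrite -shiftD Ep gen_inf_shift_unfold shift_prepend.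
Qed.

Lemma gen_inf_suffix_drop g w k i : i <= size (img g (w k)) ->
  exists p, shift p (gen_inf g w) = prepend (drop i (img g (w k))) (gen_inf g (shift k.+1 w)).
Proof.
move=> le_i; have [p Ep] := gen_inf_suffix g w k.
by exists (p + i); rewrite -shiftD Ep gen_inf_shift_unfold shift_prepend_drop.
Qed.

Lemma shift_gen_inf g w j : exists j' i, i < size (img g (w j')) /\
  shift j (gen_inf g w) = prepend (drop i (img g (w j'))) (gen_inf g (shift j'.+1 w)).
Proof.
elim: j => [|j [j' [i [lt_i Ej]]]].
  by exists 0, 0; rewrite shift0 drop0 -gen_inf_unfold size_img_gt0.
rewrite -shift1S Ej (drop_nth false lt_i) shift1_prepend_cons.
case: (ltnP i.+1 (size (img g (w j')))) => [|le_size]; first by exists j', i.+1.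
exists j'.+1, 0; rewrite drop_oversize // prepend_nil drop0 size_img_gt0.
by rewrite gen_inf_shift_unfold.
Qed.

Lemma gen_inf_tiling g (u w : word) (pos : nat -> nat) :
  (forall k, pos k.+1 = pos k + size (img g (w k))) ->
  (forall k i, i < size (img g (w k)) -> u (pos k + i) = nth false (img g (w k)) i) ->
  forall k, shift (pos k) u = gen_inf g (shift k w).
Proof.
move=> pos_next u_blocks k; apply: functional_extensionality => n.
elim/ltn_ind: n k => n IH k.
rewrite gen_inf_shift_unfold /prepend; case: ifP => [|/negbT]; first exact: u_blocks.
rewrite -leqNgt => le_size.
have size_gt0 := size_img_gt0 g (w k).
by rewrite -IH /shift ?pos_next -?addnA ?subnKC //; lia.
Qed.

Lemma gen_inf_has_letter g w b : (exists j, w j = b) -> exists q, gen_inf g w q = b.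
Proof.
case=> j wj; have [p Ep] := gen_inf_suffix g w j.
have [i [lt_i nth_i]] : exists i, i < size (img g b) /\ nth false (img g b) i = b.
  by case: g {Ep}; case: b {wj}; [exists 1 | exists 0 ..].
exists (p + i); rewrite -[gen_inf g w _]/(shift p (gen_inf g w) i) Ep.
by rewrite gen_inf_shift_unfold wj /prepend lt_i.
Qed.

Lemma subst_inf_has_letter s w b : (exists j, w j = b) -> exists j, subst_inf s w j = b.
Proof. by elim: s => [|g s IH] // /IH; apply: gen_inf_has_letter. Qed.

(** * Lexicographic comparison of prefixes *)

Definition prefix_le (n : nat) (y z : word) : Prop :=
  forall i, i < n -> (forall h, h < i -> y h = z h) -> y i -> z i.

Lemma prefix_leSE n y z : prefix_le n.+1 y z <->
  (y 0 -> z 0) /\ (y 0 = z 0 -> prefix_le n (shift 1 y) (shift 1 z)).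
Proof.
split=> [le_yz | [le0 le_tail]].
  split=> [|eq0 i lt_i eq_below]; first exact: le_yz.
  by apply: le_yz => // -[|h] // /eq_below.
case=> [_ _ | i lt_i eq_below]; first exact: le0.
by apply: (le_tail (eq_below 0 isT) i lt_i) => h lt_h; apply: eq_below.
Qed.

Lemma prefix_leW m n y z : m <= n -> prefix_le n y z -> prefix_le m y z.
Proof. by move=> le_mn le_yz i lt_im; apply/le_yz/(leq_trans lt_im). Qed.

Lemma prefix_le_head n y z : prefix_le n y z -> 0 < n -> y 0 -> z 0.
Proof. by move=> le_yz n_gt0; apply: le_yz. Qed.

Lemma prefix_le_01 n y z : y 0 = false -> z 0 = true -> prefix_le n y z.
Proof. by move=> y0 z0 [|i] // _ /(_ 0 isT); rewrite y0 z0. Qed.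

Lemma prefix_le_snoc n y z : prefix_le n y z ->
  ((forall h, h < n -> y h = z h) -> y n -> z n) -> prefix_le n.+1 y z.
Proof. by move=> le_yz le_n i; rewrite ltnS leq_eqVlt => /orP[/eqP -> | /le_yz]. Qed.

Lemma prefix_le_prepend1 n a y z :
  prefix_le n.+1 (prepend [:: a] y) (prepend [:: a] z) <-> prefix_le n y z.
Proof.
rewrite prefix_leSE -[1]/(size [:: a]) !shift_prepend.
by split=> [[_ /(_ erefl)] // | le_yz].
Qed.

Lemma prefix_le_prepend1W n a y z :
  prefix_le n y z -> prefix_le n (prepend [:: a] y) (prepend [:: a] z).
Proof. by move=> le_yz; apply/(prefix_leW (leqnSn n))/prefix_le_prepend1. Qed.

Lemma prefix_le_prepend p n y z :
  prefix_le (size p + n) (prepend p y) (prepend p z) <-> prefix_le n y z.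
Proof.
elim: p => [|a p IH]; first by rewrite !prepend_nil.
by rewrite (prepend_cons a p y) (prepend_cons a p z) addSn prefix_le_prepend1.
Qed.

Lemma prefix_le_ext n y y' z z' : prefix_le n y z ->
  (forall i, i < n -> y i = y' i) -> (forall i, i < n -> z i = z' i) ->
  prefix_le n y' z'.
Proof.
move=> le_yz Ey Ez i lt_in eq_below; rewrite -Ey // -Ez //.
apply: le_yz => // h lt_hi; have lt_hn := ltn_trans lt_hi lt_in.
by rewrite Ey // Ez // eq_below.
Qed.

Lemma prefix_le_trans n x y z : prefix_le n x y -> prefix_le n y z -> prefix_le n x z.
Proof.
elim: n x y z => [|n IH] x y z // /prefix_leSE[xy0 xy] /prefix_leSE[yz0 yz].
apply/prefix_leSE; split=> [/xy0/yz0 // | xz0].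
case: (x 0) (y 0) (z 0) xy0 yz0 xz0 xy yz => [] [] [] // xy0 yz0 _ xy yz;
  by [exact: IH (xy erefl) (yz erefl) | move: (xy0 isT) | move: (yz0 isT)].
Qed.

Lemma prefix_le_antisym n y z :
  prefix_le n y z -> prefix_le n z y -> forall i, i < n -> y i = z i.
Proof.
elim: n y z => [|n IH] y z // /prefix_leSE[yz0 yz] /prefix_leSE[zy0 zy].
have eq0 : y 0 = z 0 by apply/idP/idP.
case=> [|i] // /(IH _ _ (yz eq0) (zy (esym eq0))).
by rewrite /shift !add1n.
Qed.

Lemma prefix_le_neg n y z : prefix_le n (neg z) (neg y) <-> prefix_le n y z.
Proof.
suff imp y' z' : prefix_le n y' z' -> prefix_le n (neg z') (neg y').
  by split=> /imp; rewrite ?negK.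
move=> le_yz i lt_in eq_below; apply: contraNN => /le_yz; apply=> // h /eq_below.
by rewrite /neg => /negb_inj.
Qed.

Lemma prefix_le_11 y z : prefix_le 2 y z -> y 0 -> y 1 -> z 0 /\ z 1.
Proof.
move=> le_yz y0 y1; have z0 : z 0 by apply: le_yz.
by split=> //; apply: le_yz => // h; rewrite ltnS leqn0 => /eqP ->; rewrite y0 z0.
Qed.

Lemma prefix_le_00 y z : prefix_le 2 y z -> z 0 = false -> z 1 = false ->
  y 0 = false /\ y 1 = false.
Proof.
move=> /prefix_le_neg/prefix_le_11; rewrite /neg => + z0 z1.
by rewrite z0 z1 => /(_ isT isT) [/negbTE -> /negbTE ->].
Qed.

Lemma prefix_le_of_lex_le n y z : lex_le y z -> prefix_le n y z.
Proof.
case=> [eq_yz | [m [eq_below [ym zm]]]] i _ eq_i; first by rewrite eq_yz.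
case: (ltngtP i m) => [/eq_below -> // | lt_mi | -> ]; last by rewrite ym.
by move: (eq_i m lt_mi); rewrite ym zm.
Qed.

Lemma lex_le_of_prefix_le y z : (forall n, prefix_le n y z) -> lex_le y z.
Proof.
move=> le_yz; case: (classic (exists i, y i != z i)) => [diff | same]; last first.
  by left=> i; apply/eqP; apply: contraT => ne; case: same; exists i.
right; case: (ex_minnP diff) => d ne_d min_d; exists d.
have eq_below i : i < d -> y i = z i.
  by move=> lt_id; apply/eqP; apply: contraT => /min_d; rewrite leqNgt lt_id.
split=> //; move: (le_yz d.+1 d (ltnSn d) eq_below) ne_d.
by case: (y d); case: (z d) => // /(_ isT).
Qed.

Lemma lex_le_neg y z : lex_le (neg z) (neg y) <-> lex_le y z.
Proof.
suff imp y' z' : lex_le y' z' -> lex_le (neg z') (neg y').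
  by split=> /imp; rewrite ?negK.
case=> [eq_yz | [m [eq_below [ym zm]]]]; [left | right] => [i | ].
  by rewrite /neg eq_yz.
by exists m; rewrite /neg ym zm; split=> // i /eq_below ->.
Qed.

Lemma gen_inf_10_not_le g y z : y 0 = true -> z 0 = false ->
  ~ prefix_le 2 (gen_inf g y) (gen_inf g z).
Proof.
move=> y0 z0; rewrite (gen_inf_unfold g y) (gen_inf_unfold g z) y0 z0.
case: g => [le_yz | /prefix_le_head/(_ isT isT) | /prefix_le_head/(_ isT isT)] //.
move: (le_yz 1 isT); rewrite /prepend /= subnn gen_inf_L_head => bad.
by have : false by apply: bad => // -[].
Qed.

Lemma prefix_le_gen_inf g n N y z : 2 * n <= N ->
  prefix_le N (gen_inf g y) (gen_inf g z) -> prefix_le n y z.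
Proof.
elim: n N y z => [|n IH] N y z le_nN le_img //.
have same b : y 0 = b -> z 0 = b -> prefix_le n.+1 y z.
  move=> y0 z0; rewrite (word_eta y) (word_eta z) y0 z0.
  have size_b := size_img_le2 g b.
  apply/prefix_le_prepend1/(IH (N - size (img g b))); first by lia.
  apply/(prefix_le_prepend (img g b)); rewrite subnKC; last by lia.
  by move: le_img; rewrite (gen_inf_unfold g y) (gen_inf_unfold g z) y0 z0.
case Ey: (y 0); case Ez: (z 0); try exact: same Ey Ez; last exact: prefix_le_01.
by case: (gen_inf_10_not_le (g := g) Ey Ez); apply: prefix_leW le_img; lia.
Qed.

(** * Infimum and supremum of the suffixes of a word *)

Lemma min_suffix_upto A n : exists j0, forall j, prefix_le n (shift j0 A) (shift j A).
Proof.
elim: n => [|n [j0 min_j0]]; first by exists 0.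
case: (classic (exists j1, (forall h, h < n -> shift j1 A h = shift j0 A h) /\
                           shift j1 A n = false)) => [[j1 [eq_below j1n]] | no_j1].
  exists j1 => j; apply: prefix_le_snoc; last by rewrite j1n.
  by apply: (prefix_le_ext (min_j0 j) _ _) => // i /eq_below ->.
exists j0 => j; apply: prefix_le_snoc (min_j0 j) _ => eq_below _.
by apply: contraT => /negbTE jn; case: no_j1; exists j; split=> // h /eq_below.
Qed.

Lemma suffixes_shift A k : suffixes A (shift k A).
Proof. by exists k. Qed.

Lemma suffixesE A y : suffixes A y -> exists k, y = shift k A.
Proof. by case=> k Ek; exists k; apply: functional_extensionality. Qed.

Lemma inf_suffixes_exists A : exists m, is_inf (suffixes A) m.
Proof.
have [J min_J] : {J : nat -> nat | forall n j, prefix_le n (shift (J n) A) (shift j A)}.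
  exists (fun n => proj1_sig (constructive_indefinite_description _ (min_suffix_upto A n))).
  by move=> n; case: constructive_indefinite_description.
pose m i := shift (J i.+1) A i.
have m_prefix n i : i < n -> m i = shift (J n) A i.
  move=> lt_in; apply: (@prefix_le_antisym i.+1 (shift (J i.+1) A)) => //.
  exact: prefix_leW (min_J n _).
exists m; split=> [_ /suffixesE[k ->] | z lb_z]; apply: lex_le_of_prefix_le => n.
  by apply: (prefix_le_ext (min_J n k) _ _) => // i /m_prefix.
apply: (prefix_le_ext (prefix_le_of_lex_le (lb_z _ (suffixes_shift A (J n)))) _ _) => //.
by move=> i /m_prefix.
Qed.

(* A prefix that is minimal among the suffixes of [A], padded with zeros, is a
   lower bound of all of them. *)
Definition pad_false (a : word) n : word := fun i => if i < n then a i else false.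

Lemma pad_false_lex_le a n y : prefix_le n a y -> lex_le (pad_false a n) y.
Proof.
move=> le_ay; apply: lex_le_of_prefix_le => m i _ eq_below.
rewrite /pad_false; case: ifP => // lt_in; apply: le_ay => // h lt_hi.
by move: (eq_below h lt_hi); rewrite /pad_false (ltn_trans lt_hi lt_in).
Qed.

Lemma inf_suffixes_attained A m n z :
  is_inf (suffixes A) m -> prefix_le n m z -> exists j, prefix_le n (shift j A) z.
Proof.
move=> [_ greatest] le_mz; have [j0 min_j0] := min_suffix_upto A n; exists j0.
have lb : lex_le (pad_false (shift j0 A) n) m.
  by apply: greatest => _ /suffixesE[k ->]; apply: pad_false_lex_le.
apply: (prefix_le_ext (prefix_le_trans (prefix_le_of_lex_le lb) le_mz) _ _) => //.
by move=> i lt_in; rewrite /pad_false lt_in.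
Qed.

Lemma suffixes_neg A y : suffixes (neg A) y <-> suffixes A (neg y).
Proof.
split=> -[k Ek]; exists k => n; first by rewrite /neg Ek negbK.
by rewrite /neg -Ek negbK.
Qed.

Lemma is_sup_neg A m : is_sup (suffixes A) m <-> is_inf (suffixes (neg A)) (neg m).
Proof.
split=> -[bound extremal]; split.
- by move=> y /suffixes_neg /bound; rewrite -lex_le_neg negK.
- move=> z lb_z; rewrite -lex_le_neg negK; apply: extremal => y.
  by rewrite -[y]negK -suffixes_neg => /lb_z; rewrite lex_le_neg.
- by move=> y; rewrite -[y]negK -suffixes_neg => /bound; rewrite negK lex_le_neg.
- move=> z ub_z; rewrite -lex_le_neg; apply: extremal => y /suffixes_neg /ub_z.
  by rewrite -lex_le_neg negK.
Qed.

Lemma inf_wordP u : is_inf (suffixes u) (inf_word u).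
Proof. exact: epsilon_spec (inf_suffixes_exists u). Qed.

Lemma sup_wordP u : is_sup (suffixes u) (sup_word u).
Proof.
apply: epsilon_spec; have [m inf_m] := inf_suffixes_exists (neg u).
by exists (neg m); rewrite is_sup_neg negK.
Qed.

Definition above_suffixes (A u : word) : Prop :=
  forall k n, exists j, prefix_le n (shift j A) (shift k u).
Definition below_suffixes (A u : word) : Prop :=
  forall k n, exists j, prefix_le n (shift k u) (shift j A).

Lemma below_suffixes_neg A u : below_suffixes A u <-> above_suffixes (neg A) (neg u).
Proof.
by split=> bound k n; have [j le_j] := bound k n; exists j;
  move: le_j; rewrite -(prefix_le_neg n (shift k u)).
Qed.

Lemma above_suffixes_of_inf A u a b :
  is_inf (suffixes A) a -> is_inf (suffixes u) b -> lex_le a b -> above_suffixes A u.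
Proof.
move=> infA [lb_u _] le_ab k n; apply: (inf_suffixes_attained infA).
apply: prefix_le_trans (prefix_le_of_lex_le le_ab) _.
exact/prefix_le_of_lex_le/lb_u/suffixes_shift.
Qed.

Lemma below_suffixes_of_sup A u a b :
  is_sup (suffixes A) a -> is_sup (suffixes u) b -> lex_le b a -> below_suffixes A u.
Proof.
rewrite !is_sup_neg -lex_le_neg below_suffixes_neg.
exact: above_suffixes_of_inf.
Qed.

Lemma above_suffixes_shift A u r : above_suffixes A u -> above_suffixes A (shift r u).
Proof. by move=> bound k n; rewrite shiftD. Qed.

Lemma below_suffixes_shift A u r : below_suffixes A u -> below_suffixes A (shift r u).
Proof. by move=> bound k n; rewrite shiftD. Qed.

Lemma above_suffixes_gen_inf g Y u k n : above_suffixes (gen_inf g Y) u ->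
  exists j i, i < size (img g (Y j)) /\
    prefix_le n (prepend (drop i (img g (Y j))) (gen_inf g (shift j.+1 Y))) (shift k u).
Proof.
move=> bound; have [j le_j] := bound k n.
by have [j' [i [lt_i Ej]]] := shift_gen_inf g Y j; exists j', i; rewrite -Ej.
Qed.

Lemma below_suffixes_gen_inf g X u k n : below_suffixes (gen_inf g X) u ->
  exists j i, i < size (img g (X j)) /\
    prefix_le n (shift k u) (prepend (drop i (img g (X j))) (gen_inf g (shift j.+1 X))).
Proof.
move=> bound; have [j le_j] := bound k n.
by have [j' [i [lt_i Ej]]] := shift_gen_inf g X j; exists j', i; rewrite -Ej.
Qed.

(** * Desubstitution by L and by R *)

Lemma gen_inf_L_no11 X j : ~ (shift j (gen_inf GL X) 0 /\ shift j (gen_inf GL X) 1).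
Proof.
have [j' [i [lt_i ->]]] := shift_gen_inf GL X j; move: i lt_i.
by case: (X j') => -[|[|i]] //= _; rewrite /prepend /= ?gen_inf_L_head; case.
Qed.

Lemma gen_inf_R_no00 Y j :
  ~ (shift j (gen_inf GR Y) 0 = false /\ shift j (gen_inf GR Y) 1 = false).
Proof.
have [j' [i [lt_i ->]]] := shift_gen_inf GR Y j; move: i lt_i.
by case: (Y j') => -[|[|i]] //= _; rewrite /prepend /=; case.
Qed.

Lemma below_suffixes_L_no11 X (u : word) :
  below_suffixes (gen_inf GL X) u -> forall p, u p -> u p.+1 -> False.
Proof.
move=> bound p up up1; have [j /prefix_le_11] := bound p 2.
by rewrite /shift addn0 addn1 => /(_ up up1) /gen_inf_L_no11.
Qed.

Lemma above_suffixes_R_no00 Y u :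
  above_suffixes (gen_inf GR Y) u -> forall p, u p = false -> u p.+1 = false -> False.
Proof.
move=> bound p up up1; have [j /prefix_le_00] := bound p 2.
by rewrite /shift addn0 addn1 => /(_ up up1) /gen_inf_R_no00.
Qed.

Lemma gen_inf_L_of_no11 (u : word) : (forall p, u p -> u p.+1 -> False) ->
  exists r w, shift r u = gen_inf GL w.
Proof.
(* the parse starts at the first 0 of [u], which is at position [u 0] *)
move=> no11; pose pos k := iter k (fun p => p + (if u p.+1 then 2 else 1)) (u 0 : nat).
have u_pos k : u (pos k) = false.
  elim: k => [|k IH] /=; first by case u0: (u 0) => //; case u1: (u 1); [case: (no11 0)|].
  rewrite -/(pos k); case u1: (u (pos k).+1); last by rewrite addn1.
  by rewrite addn2; case u2: (u (pos k).+2) => //; case: (no11 _ u1 u2).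
set w := fun k => u (pos k).+1.
suff tiles k : shift (pos k) u = gen_inf GL (shift k w).
  by exists (pos 0), w; rewrite tiles shift0.
apply: gen_inf_tiling => {k} [k | k [|[|i]] lt_i] /=; rewrite -/(pos k) /w.
- by case: (u _).
- by rewrite addn0 u_pos; case: (u _).
- by move: lt_i; rewrite addn1; case: (u _).
- by move: lt_i; rewrite /w; case: (u (pos k).+1).
Qed.

Lemma gen_inf_R_of_no00 u : (forall p, u p = false -> u p.+1 = false -> False) ->
  exists w, u = gen_inf GR w.
Proof.
move=> no00; pose pos k := iter k (fun p => p + (if u p then 1 else 2)) 0.
set w := fun k => u (pos k).
suff tiles k : shift (pos k) u = gen_inf GR (shift k w).
  by exists w; rewrite -(shift0 w) -tiles shift0.
apply: gen_inf_tiling => {k} [k | k [|[|i]] lt_i] /=; rewrite -/(pos k) /w.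
- by case: (u _).
- by rewrite addn0; case: (u _).
- move: lt_i; rewrite /w addn1; case u0: (u (pos k)) => // _.
  by case u1: (u (pos k).+1) => //; case: (no00 _ u0 u1).
- by move: lt_i; rewrite /w; case: (u (pos k)).
Qed.

Lemma above_suffixes_L_inv Y w :
  above_suffixes (gen_inf GL Y) (gen_inf GL w) -> above_suffixes Y w.
Proof.
move=> bound k [|n]; first by exists 0.
have [p Ep] := gen_inf_suffix GL w k.
have [j [i [lt_i]]] := above_suffixes_gen_inf p (2 * n.+1) bound.
rewrite Ep; case: i lt_i => [_ | [|i] lt_i]; last by move: lt_i; case: (Y j).
  by rewrite drop0 -gen_inf_shift_unfold => /(prefix_le_gen_inf (leqnn _)); exists j.
move: lt_i; case: (Y j) => //= _ /prefix_le_head.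
by rewrite gen_inf_L_head => /(_ isT isT).
Qed.

Lemma below_suffixes_L_inv (X w : word) : (exists j, X j) ->
  below_suffixes (gen_inf GL X) (gen_inf GL w) -> below_suffixes X w.
Proof.
move=> [j1 Xj1] bound k n; case wk: (w k); last first.
  by exists j1; apply: prefix_le_01; rewrite shift_head.
case: n => [|n]; first by exists 0.
have [p Ep] := @gen_inf_suffix_drop GL w k 1 (size_img_gt0 _ _).
have [j [i [lt_i]]] := below_suffixes_gen_inf p (2 * n).+1 bound.
rewrite Ep wk /=; move: i lt_i; case Xj: (X j) => -[|[|i]] //= _;
  try by move/prefix_le_head/(_ isT isT).
move/prefix_le_prepend1/(prefix_le_gen_inf (leqnn _)) => le_next.
by exists j; rewrite (shift_eta k) (shift_eta j) wk Xj; apply/prefix_le_prepend1.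
Qed.

Lemma above_suffixes_R_inv Y w :
  above_suffixes (gen_inf GR Y) (gen_inf GR w) -> above_suffixes Y w.
Proof.
move=> bound k [|n]; first by exists 0.
have [p Ep] := gen_inf_suffix GR w k.
have [j [i [lt_i]]] := above_suffixes_gen_inf p (2 * n.+1) bound.
rewrite Ep; case: i lt_i => [_ | [|i] lt_i]; last by move: lt_i; case: (Y j).
  by rewrite drop0 -gen_inf_shift_unfold => /(prefix_le_gen_inf (leqnn _)); exists j.
move: lt_i; case Yj: (Y j) => //= _ /prefix_le_head /(_ isT isT).
by rewrite gen_inf_R_head shift_head => wk; exists j; apply: prefix_le_01; rewrite shift_head.
Qed.

Lemma gen_inf_R_suffix_after w k :
  exists q, shift q (gen_inf GR w) = prepend [:: true] (gen_inf GR (shift k.+1 w)).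
Proof.
have [q Eq] := @gen_inf_suffix_drop GR w k (size (img GR (w k))).-1 (leq_pred _).
by exists q; rewrite Eq; case: (w k).
Qed.

Lemma below_suffixes_R_inv X w :
  below_suffixes (gen_inf GR X) (gen_inf GR w) -> below_suffixes X (shift 1 w).
Proof.
move=> bound k n; rewrite shiftD add1n.
have [q Eq] := gen_inf_R_suffix_after w k.
have [j [i [lt_i]]] := below_suffixes_gen_inf q (2 * n).+1 bound.
rewrite Eq; move: i lt_i; case: (X j) => -[|[|i]] //= _;
  try by move/prefix_le_head/(_ isT isT).
all: by move/prefix_le_prepend1/(prefix_le_gen_inf (leqnn _)); exists j.+1.
Qed.

Lemma desubstitute_L (X Y u : word) : (exists j, X j) ->
  above_suffixes (gen_inf GL Y) u -> below_suffixes (gen_inf GL X) u ->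
  exists m w, [/\ shift m u = gen_inf GL w, above_suffixes Y w & below_suffixes X w].
Proof.
move=> X1 above_u below_u.
have [r [w Er]] := gen_inf_L_of_no11 (below_suffixes_L_no11 below_u).
have := above_suffixes_shift r above_u; have := below_suffixes_shift r below_u.
rewrite Er => below_w above_w; exists r, w; split=> //.
  exact: above_suffixes_L_inv.
exact: below_suffixes_L_inv.
Qed.

Lemma desubstitute_R (X Y u : word) :
  above_suffixes (gen_inf GR Y) u -> below_suffixes (gen_inf GR X) u ->
  exists m w, [/\ shift m u = gen_inf GR w, above_suffixes Y w & below_suffixes X w].
Proof.
move=> above_u below_u.
have [w Eu] := gen_inf_R_of_no00 (above_suffixes_R_no00 above_u).
rewrite Eu in above_u below_u; have [p Ep] := gen_inf_suffix GR w 1.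
exists p, (shift 1 w); split; first by rewrite Eu.
  exact/above_suffixes_shift/above_suffixes_R_inv.
exact: below_suffixes_R_inv.
Qed.

(** * Desubstitution by M *)

Definition M0 : word := gen_inf GM zero_bar.

Lemma M0E : M0 = prepend [:: false; true] M0.
Proof. by rewrite {1}/M0 gen_inf_unfold. Qed.

Lemma M0_odd n : M0 n = odd n.
Proof.
elim/ltn_ind: n => n IH; rewrite M0E /prepend.
by case: n IH => [|[|n]] IH //=; rewrite !subSS subn0 IH ?negbK.
Qed.

Lemma M0_le_gen_inf_M n w : prefix_le n M0 (gen_inf GM w).
Proof.
elim/ltn_ind: n w => -[|n] IH w //; rewrite M0E gen_inf_unfold.
case: (w 0); first exact: prefix_le_01.
apply: (@prefix_leW _ (size [:: false; true] + (n.+1 - 2))); first by rewrite /=; lia.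
by apply/prefix_le_prepend/IH; lia.
Qed.

Lemma shift_gen_inf_M_lower Y j n :
  prefix_le n (prepend [:: false] M0) (shift j (gen_inf GM Y)).
Proof.
have [j' [i [lt_i ->]]] := shift_gen_inf GM Y j.
case: i lt_i => [|[|i]] //; case: (Y j') => // _; try exact: prefix_le_01.
  rewrite /= (prepend_cons false [:: true]); apply: prefix_le_prepend1W.
  by apply: prefix_le_01; rewrite ?M0_odd.
by apply: prefix_le_prepend1W; apply: M0_le_gen_inf_M.
Qed.

Definition M_lower (u : word) : Prop :=
  forall k n, prefix_le n (prepend [:: false] M0) (shift k u).

Lemma M_lower_of_above Y u : above_suffixes (gen_inf GM Y) u -> M_lower u.
Proof.
move=> bound k n; have [j le_j] := bound k n.
exact: prefix_le_trans (@shift_gen_inf_M_lower Y j n) le_j.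
Qed.

Lemma M_lower_of_below X u : below_suffixes (gen_inf GM X) u -> M_lower (neg u).
Proof. by rewrite below_suffixes_neg -gen_inf_M_neg; apply: M_lower_of_above. Qed.

Definition M_anchor (u : word) (r : nat) : Prop :=
  u r = false -> forall n, prefix_le n M0 (shift r u).

Lemma M_anchor_of_repeat u p : M_lower u -> u p = u p.+1 -> M_anchor u p.+1.
Proof.
move=> lower up up1 n; have := lower p n.+1.
by rewrite shift_eta up up1 => /prefix_le_prepend1.
Qed.

Lemma M_anchor_step u r : M_lower (neg u) -> M_anchor u r -> u r = false ->
  [/\ u r.+1 = true, M_anchor u r.+2 & M_anchor (neg u) r.+2].
Proof.
move=> upper anchor ur.
have Er : shift r u = prepend [:: false] (prepend [:: u r.+1] (shift r.+2 u)).
  by rewrite shift_eta ur shift_eta.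
have M0_01 : M0 = prepend [:: false] (prepend [:: true] M0) by rewrite {1}M0E prepend_cons.
have ur1 : u r.+1 = true.
  case ur1: (u r.+1) => //; have := anchor ur 2.
  by rewrite Er M0_01 ur1 => /prefix_le_prepend1/prefix_le_head/(_ isT isT).
split=> // [_ n | _ n].
  by have := anchor ur n.+2; rewrite Er {1}M0_01 ur1 => /prefix_le_prepend1/prefix_le_prepend1.
have nur1 : neg u r.+1 = false by rewrite /neg ur1.
by have := upper r.+1 n.+1; rewrite shift_eta nur1 => /prefix_le_prepend1.
Qed.

Lemma M_alternation_step u r : M_lower u -> M_lower (neg u) ->
  M_anchor u r -> M_anchor (neg u) r ->
  [/\ u r.+1 = ~~ u r, M_anchor u r.+2 & M_anchor (neg u) r.+2].
Proof.
move=> lower upper anchor anchor_neg; case ur: (u r); last first.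
  by have [-> ? ?] := M_anchor_step upper anchor ur.
have nur : neg u r = false by rewrite /neg ur.
have lower' : M_lower (neg (neg u)) by rewrite negK.
have [nur1 anchor2 anchor2'] := M_anchor_step lower' anchor_neg nur.
rewrite negK in anchor2'; split=> //.
by move: nur1; rewrite /neg; case: (u r.+1).
Qed.

Lemma M_eventually_alternating u : M_lower u -> M_lower (neg u) ->
  exists r, forall k, u (r + 2 * k).+1 = ~~ u (r + 2 * k).
Proof.
move=> lower upper.
case: (classic (exists p, u p = u p.+1)) => [[p up] | never]; last first.
  exists 0 => k; case E0: (u _); case E1: (u _) => //;
    by case: never; exists (0 + 2 * k); rewrite E0 E1.
exists p.+1.
suff anchors k : M_anchor u (p.+1 + 2 * k) /\ M_anchor (neg u) (p.+1 + 2 * k).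
  by move=> k; have [a a'] := anchors k; case: (M_alternation_step lower upper a a').
elim: k => [|k [a a']].
  by rewrite addn0; split; apply: M_anchor_of_repeat; rewrite // /neg up.
have [_ ? ?] := M_alternation_step lower upper a a'.
by rewrite mulnS addnCA add2n.
Qed.

Lemma gen_inf_M_of_alternating u r :
  (forall k, u (r + 2 * k).+1 = ~~ u (r + 2 * k)) ->
  shift r u = gen_inf GM (fun k => u (r + 2 * k)).
Proof.
move=> alt.
set w := fun k => u (r + 2 * k).
suff tiles k : shift (r + 2 * k) u = gen_inf GM (shift k w).
  by have := tiles 0; rewrite muln0 addn0 shift0.
apply: (@gen_inf_tiling GM u w (fun k => r + 2 * k)) => {k} [k | k [|[|i]] lt_i].
- by rewrite /w; case: (u _) => /=; lia.
- by rewrite addn0 /w; case: (u _).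
- by rewrite addn1 alt /w; case: (u _).
- by move: lt_i; case: (w k).
Qed.

Lemma M_desubstitution X Y u :
  above_suffixes (gen_inf GM Y) u -> below_suffixes (gen_inf GM X) u ->
  exists r w, shift r u = gen_inf GM w.
Proof.
move=> /M_lower_of_above lower /M_lower_of_below upper.
have [r alt] := M_eventually_alternating lower upper.
by exists r, (fun k => u (r + 2 * k)); apply: gen_inf_M_of_alternating.
Qed.

Lemma above_suffixes_M_after_10 Y w k n :
  above_suffixes (gen_inf GM Y) (gen_inf GM w) -> w k = true -> w k.+1 = false ->
  exists j, prefix_le n (shift j Y) (shift k.+1 w).
Proof.
move=> bound wk wk1.
have [p Ep] := @gen_inf_suffix_drop GM w k 1 (size_img_gt0 _ _).
have [j [i [lt_i]]] := above_suffixes_gen_inf p (2 * n).+2 bound.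
rewrite Ep wk /=; case: i lt_i => [|[|i]] //; case: (Y j) => //= _.
- by move/prefix_le_head/(_ isT isT).
- rewrite prepend_cons (gen_inf_shift_unfold GM w k.+1) wk1 => /prefix_le_prepend1.
  by move/prefix_le_head/(_ isT isT).
- by move/prefix_le_prepend1/prefix_le_gen_inf => le_j; exists j.+1; apply: le_j.
- by move/prefix_le_head/(_ isT isT).
Qed.

Lemma above_suffixes_M_inv Y w k : (exists j, Y j = false) ->
  above_suffixes (gen_inf GM Y) (gen_inf GM w) -> (exists i, i <= k /\ w i = true) ->
  forall n, exists j, prefix_le n (shift j Y) (shift k w).
Proof.
move=> [j0 Yj0] bound.
have at_one k' n : w k' = true -> exists j, prefix_le n (shift j Y) (shift k' w).
  by move=> wk; exists j0; apply: prefix_le_01; rewrite shift_head.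
elim: k => [|k IH] [i [le_ik wi]] n.
  by apply: at_one; move: le_ik wi; rewrite leqn0 => /eqP ->.
case wk1: (w k.+1); first exact: at_one.
case wk: (w k); first exact: above_suffixes_M_after_10.
have le_ik' : i <= k.
  by move: le_ik; rewrite leq_eqVlt ltnS => /orP[/eqP Ei | //]; rewrite Ei wk1 in wi.
have [j] := IH (ex_intro _ i (conj le_ik' wi)) n.+1.
rewrite (shift_eta k) (shift_eta j) wk; case: (Y j) => [/prefix_le_head/(_ isT isT) // |].
by move/prefix_le_prepend1; exists j.+1.
Qed.

Lemma below_suffixes_M_inv (X w : word) k : (exists j, X j) ->
  below_suffixes (gen_inf GM X) (gen_inf GM w) -> (exists i, i <= k /\ w i = false) ->
  forall n, exists j, prefix_le n (shift k w) (shift j X).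
Proof.
move=> [j1 Xj1] /below_suffixes_neg; rewrite -!gen_inf_M_neg => bound [i [le_ik wi]] n.
have [||j le_j] := @above_suffixes_M_inv (neg X) (neg w) k _ bound _ n.
- by exists j1; rewrite /neg Xj1.
- by exists i; rewrite /neg wi.
by exists j; apply/prefix_le_neg.
Qed.

Lemma shift1_gen_inf_M_ones : shift 1 (gen_inf GM (neg zero_bar)) = M0.
Proof.
rewrite gen_inf_M_neg -/M0; apply: functional_extensionality => n.
by rewrite /shift /neg add1n !M0_odd /= negbK.
Qed.

Lemma desubstitute_M (X Y u : word) : (exists j, X j) -> (exists j, Y j = false) ->
  above_suffixes (gen_inf GM Y) u -> below_suffixes (gen_inf GM X) u ->
  (exists k, shift k u = M0) \/
  exists m w, [/\ shift m u = gen_inf GM w, above_suffixes Y w & below_suffixes X w].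
Proof.
move=> X1 Y0 above_u below_u.
have [r [w Er]] := M_desubstitution above_u below_u.
have := above_suffixes_shift r above_u; have := below_suffixes_shift r below_u.
rewrite Er => below_w above_w.
case: (classic (exists i, w i)) => [[i1 wi1] | no1]; last first.
  left; exists r; rewrite Er /M0; congr gen_inf; apply: functional_extensionality => i.
  by apply: negbTE; apply/negP => wi; case: no1; exists i.
case: (classic (exists i, w i = false)) => [[i0 wi0] | no0]; last first.
  left; exists r.+1; rewrite -shift1S Er -shift1_gen_inf_M_ones; congr (shift 1 (gen_inf _ _)).
  apply: functional_extensionality => i; rewrite /neg /=.
  by apply: contraT => /negbTE wi; case: no0; exists i.
right; have [p Ep] := gen_inf_suffix GM w (maxn i0 i1).
exists (r + p), (shift (maxn i0 i1) w); split; first by rewrite -shiftD Er Ep.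
- move=> k n; rewrite shiftD; apply: (above_suffixes_M_inv Y0 above_w).
  by exists i1; split=> //; lia.
- move=> k n; rewrite shiftD; apply: (below_suffixes_M_inv X1 below_w).
  by exists i0; split=> //; lia.
Qed.

Lemma desubstitute s u :
  above_suffixes (subst_inf s one_zero_bar) u ->
  below_suffixes (subst_inf s zero_one_bar) u ->
  (exists k v, shift k u = subst_inf s v) \/
  (exists k s0 t, morph_eq s (rcons s0 GM ++ t) /\
                  shift k u = subst_inf (rcons s0 GM) zero_bar).
Proof.
elim: s u => [|g s IH] u above_u below_u; first by left; exists 0, u; rewrite shift0.
have X1 : exists j, subst_inf s zero_one_bar j by apply: subst_inf_has_letter; exists 1.
have Y0 : exists j, subst_inf s one_zero_bar j = false.
  by apply: subst_inf_has_letter; exists 1.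
have [[-> [k Ek]] | [m [w [Em above_w below_w]]]] :
    (g = GM /\ exists k, shift k u = M0) \/
    exists m w, [/\ shift m u = gen_inf g w, above_suffixes (subst_inf s one_zero_bar) w
                  & below_suffixes (subst_inf s zero_one_bar) w].
  case: g above_u below_u => above_u below_u.
  - by right; apply: desubstitute_L.
  - by case: (desubstitute_M X1 Y0 above_u below_u); [left | right].
  - by right; apply: desubstitute_R.
  by right; exists k, [::], s.
have [[k [v Ev]] | [k [s0 [t [Es Ek]]]]] := IH w above_w below_w;
  have [p Ep] := gen_inf_suffix g w k.
  by left; exists (m + p), v; rewrite -shiftD Em Ep Ev.
right; exists (m + p), (g :: s0), t.
by split; [move=> x /=; rewrite Es | rewrite -shiftD Em Ep Ek].
Qed.

Theorem lemma2p6 (u : word) (s : seq gen) :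
  lex_le (inf_word (subst_inf s one_zero_bar)) (inf_word u) ->
  lex_le (sup_word u) (sup_word (subst_inf s zero_one_bar)) ->
  (exists (k : nat) (v : word), forall n, u (k + n) = subst_inf s v n) \/
  (exists (k : nat) (s0 t : seq gen),
      morph_eq s (rcons s0 GM ++ t) /\
      forall n, u (k + n) = subst_inf (rcons s0 GM) zero_bar n).
Proof.
move=> le_inf le_sup.
have above_u := above_suffixes_of_inf (inf_wordP _) (inf_wordP u) le_inf.
have below_u := below_suffixes_of_sup (sup_wordP _) (sup_wordP u) le_sup.
case: (desubstitute above_u below_u) => [[k [v Ek]] | [k [s0 [t [Es Ek]]]]]; [left | right].
  by exists k, v => n; rewrite -Ek.
by exists k, s0, t; split=> // n; rewrite -Ek.
Qed.
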